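(* Let $X\in\mathbf{M}_{2N}(\mathbb{C})$ satisfy $X^{*}=X^{\sharp}$. Then there exist a unitary $U$ and a positive semidefinite $P$ in $\mathbf{M}_{2N}(\mathbb{C})$ with $U^{*}=U^{\sharp}$, $P^{*}=P^{\sharp}$ and $X=UP$.
   Context: For $X\in\mathbf{M}_{2N}(\mathbb{C})$ in $N\times N$ blocks $X=\begin{bmatrix}A&B\\C&D\end{bmatrix}$, the dual operation is $X^{\sharp}=\begin{bmatrix}D^{\mathrm T}&-B^{\mathrm T}\\-C^{\mathrm T}&A^{\mathrm T}\end{bmatrix}$. *)

From HB Require Import structures.
From mathcomp Require Import all_boot all_order all_algebra.
From mathcomp Require Import complex.
From mathcomp Require Import reals.
Set Implicit Arguments. Unset Strict Implicit. Unset Printing Implicit Defensive.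
Import Order.TTheory GRing.Theory Num.Theory.
Local Open Scope ring_scope.

Definition adj {C : numClosedFieldType} {m n : nat} (X : 'M[C]_(m, n)) : 'M[C]_(n, m) :=
  (map_mx Num.conj X)^T.

Definition sharp {C : numClosedFieldType} {N : nat} (X : 'M[C]_(N + N)) : 'M[C]_(N + N) :=
  block_mx (drsubmx X)^T (- (ursubmx X)^T) (- (dlsubmx X)^T) (ulsubmx X)^T.

Definition unitary_mx {C : numClosedFieldType} {n : nat} (U : 'M[C]_n) : Prop :=
  adj U *m U = 1%:M /\ U *m adj U = 1%:M.

Definition psd_mx {C : numClosedFieldType} {n : nat} (P : 'M[C]_n) : Prop :=
  adj P = P /\ forall v : 'cV[C]_n, 0 <= (adj v *m P *m v) 0 0.

From HB Require Import structures.
From mathcomp Require Import all_boot all_order all_algebra.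
From mathcomp Require Import complex.
From mathcomp Require Import reals.
Import GRing.Theory Num.Theory Num.Def.
Local Open Scope ring_scope.
Set Implicit Arguments. Unset Strict Implicit. Unset Printing Implicit Defensive.

(* With J = [0 1; -1 0] one has X^sharp = J X^T J^T, so the hypothesis says
   that X is fixed by the antilinear ring automorphism jconj M = J conj(M) J^T,
   which commutes with the adjoint.  Hence A = X^* X is a jconj-fixed positive
   semidefinite matrix.  Its eigenvectors can be chosen as N orthonormal
   columns F spanning a subspace isotropic for the form v^T J w: a unit
   eigenvector orthogonal to the columns of V = [F, J^T conj(F)] exists as
   long as F is incomplete, since that orthogonal space is A-invariant, and
   adjoining it keeps F isotropic because v^T J v = 0.  The unitary V is then
   jconj-fixed and diagonalizes A as diag(l, l).  With s = sqrt l, the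
   columns of X F diag(s)^-1 supported on s <> 0 again form such a family,
   which completes to a full one H; for W = [H, J^T conj(H)] we get
   X V = W diag(s, s), hence X = (W V^* ) (V diag(s, s) V^* ). *)

Section Columns.
Variable R : pzRingType.

Lemma col_matrixP m p (A B : 'M[R]_(m, p)) : (forall j, col j A = col j B) -> A = B.
Proof.
by move=> eqAB; apply/matrixP=> i j; have /matrixP/(_ i 0) := eqAB j; rewrite !mxE.
Qed.

Lemma col_mulmx m p q (A : 'M[R]_(m, p)) (B : 'M[R]_(p, q)) j :
  col j (A *m B) = A *m col j B.
Proof. by rewrite !colE mulmxA. Qed.

End Columns.

Lemma col_mul_diag (R : comPzRingType) m p (A : 'M[R]_(m, p)) d j :
  col j (A *m diag_mx d) = d 0 j *: col j A.
Proof. by apply/matrixP=> a b; rewrite mul_mx_diag !mxE mulrC. Qed.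

Lemma kernel_of_zero_row (F : fieldType) m (B : 'M[F]_m) (r : 'I_m) :
  row r B = 0 -> exists2 u : 'cV[F]_m, u != 0 & B *m u = 0.
Proof.
move=> Br0; have detB0 : \det B^T == 0.
  rewrite det_tr (expand_det_row _ r) big1 // => k _.
  by have /matrixP/(_ 0 k) := Br0; rewrite !mxE => ->; rewrite mul0r.
have [w w0 wB] := det0P detB0.
exists w^T; first by apply: contra w0 => /eqP/(congr1 trmx); rewrite trmxK trmx0 => ->.
by rewrite -[B]trmxK -trmx_mul wB trmx0.
Qed.

Section Adjoint.
Variable C : numClosedFieldType.

Lemma conj_mxK m p (A : 'M[C]_(m, p)) : map_mx conjC (map_mx conjC A) = A.
Proof. by apply/matrixP=> i j; rewrite !mxE conjCK. Qed.

Lemma adjK m p (A : 'M[C]_(m, p)) : adj (adj A) = A.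
Proof. by apply/matrixP=> i j; rewrite !mxE conjCK. Qed.

Lemma adjM m p q (A : 'M[C]_(m, p)) (B : 'M[C]_(p, q)) :
  adj (A *m B) = adj B *m adj A.
Proof. by rewrite /adj map_mxM trmx_mul. Qed.

Lemma adjD m p (A B : 'M[C]_(m, p)) : adj (A + B) = adj A + adj B.
Proof. by rewrite /adj map_mxD linearD. Qed.

Lemma adjZ m p a (A : 'M[C]_(m, p)) : adj (a *: A) = a^* *: adj A.
Proof. by rewrite /adj map_mxZ linearZ. Qed.

Lemma adj0 m p : adj (0 : 'M[C]_(m, p)) = 0.
Proof. by rewrite /adj map_mx0 trmx0. Qed.

Lemma adj_delta m p (i : 'I_m) (j : 'I_p) :
  adj (delta_mx i j : 'M[C]_(m, p)) = delta_mx j i.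
Proof. by rewrite /adj map_delta_mx trmx_delta. Qed.

Lemma conj_diag_mx m (d : 'rV[C]_m) :
  (forall i, (d 0 i)^* = d 0 i) -> map_mx conjC (diag_mx d) = diag_mx d.
Proof.
by move=> d_real; rewrite map_diag_mx; congr diag_mx; apply/rowP=> i; rewrite !mxE; exact: d_real.
Qed.

Lemma adj_diag_mx m (d : 'rV[C]_m) :
  (forall i, (d 0 i)^* = d 0 i) -> adj (diag_mx d) = diag_mx d.
Proof. by move=> d_real; rewrite /adj conj_diag_mx // tr_diag_mx. Qed.

Lemma norm2_ge0 m (u : 'cV[C]_m) : 0 <= (adj u *m u) 0 0.
Proof. by rewrite mxE sumr_ge0 // => k _; rewrite !mxE mulrC mul_conjC_ge0. Qed.

Lemma norm2_eq0 m (u : 'cV[C]_m) : (adj u *m u) 0 0 = 0 -> u = 0.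
Proof.
rewrite mxE => /psumr_eq0P u0; apply/matrixP=> k l; rewrite ord1 mxE.
have /eqP : (adj u) 0 k * u k 0 = 0 by apply: u0 => // i _; rewrite !mxE mulrC mul_conjC_ge0.
by rewrite !mxE /= -normCKC sqrf_eq0 normr_eq0 => /eqP.
Qed.

Lemma normalize_cV m (u : 'cV[C]_m) : u != 0 ->
  exists c : C, adj (c *: u) *m (c *: u) = 1%:M.
Proof.
move=> u0; set t := (adj u *m u) 0 0.
have t0 : t != 0 by apply: contra u0 => /eqP/norm2_eq0 ->.
have c_real : (sqrtC t)^-1^* = (sqrtC t)^-1.
  by apply: geC0_conj; rewrite invr_ge0 sqrtC_ge0 norm2_ge0.
exists (sqrtC t)^-1; rewrite adjZ -scalemxAl -scalemxAr scalerA c_real.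
by rewrite [adj u *m u]mx11_scalar scale_scalar_mx -expr2 exprVn sqrtCK mulVf.
Qed.

Lemma norm2_col m p (Y : 'M[C]_(m, p)) j :
  (adj (col j Y) *m col j Y) 0 0 = (adj Y *m Y) j j.
Proof.
by rewrite !colE adjM adj_delta -mulmxA (mulmxA (adj Y)) -rowE -colE !mxE.
Qed.

Lemma gram_diag_ge0 m p (Y : 'M[C]_(m, p)) (d : 'rV[C]_p) :
  adj Y *m Y = diag_mx d -> forall j, 0 <= d 0 j.
Proof. by move=> YY j; have := norm2_ge0 (col j Y); rewrite norm2_col YY mxE eqxx mulr1n. Qed.

Lemma unitary_mxM n (U V : 'M[C]_n) :
  unitary_mx U -> unitary_mx V -> unitary_mx (U *m V).
Proof.
move=> [UU UU'] [VV VV']; rewrite /unitary_mx adjM !mulmxA.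
by rewrite -(mulmxA _ (adj U)) UU mulmx1 VV -(mulmxA U) VV' mulmx1.
Qed.

Lemma unitary_mx_adj n (U : 'M[C]_n) : unitary_mx U -> unitary_mx (adj U).
Proof. by rewrite /unitary_mx adjK => -[]. Qed.

Lemma psd_mx_conj_diag m n (V : 'M[C]_(m, n)) (d : 'rV[C]_n) :
  (forall k, 0 <= d 0 k) -> psd_mx (V *m diag_mx d *m adj V).
Proof.
move=> d_ge0; have d_real k : (d 0 k)^* = d 0 k by apply: geC0_conj.
split; first by rewrite !adjM adjK adj_diag_mx // mulmxA.
move=> v; set w := adj V *m v.
have -> : adj v *m (V *m diag_mx d *m adj V) *m v = adj w *m diag_mx d *m w.
  by rewrite adjM adjK !mulmxA.
rewrite -mulmxA mul_diag_mx mxE; apply: sumr_ge0 => k _.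
by rewrite !mxE mulrCA mulr_ge0 // mulrC mul_conjC_ge0.
Qed.

Lemma adj_conj m p (A : 'M[C]_(m, p)) : adj (map_mx conjC A) = A^T.
Proof. by rewrite /adj conj_mxK. Qed.

Lemma conj_adj m p (A : 'M[C]_(m, p)) : map_mx conjC (adj A) = A^T.
Proof. by rewrite /adj -map_trmx conj_mxK. Qed.

Lemma tstar_adj m p (A : 'M[C]_(m, p)) : map_mx conjC A^T = adj A.
Proof. by rewrite /adj map_trmx. Qed.

Lemma adj_row_mx m p1 p2 (A : 'M[C]_(m, p1)) (B : 'M[C]_(m, p2)) :
  adj (row_mx A B) = col_mx (adj A) (adj B).
Proof. by rewrite /adj map_row_mx tr_row_mx. Qed.

End Adjoint.

Section Symplectic.
Variables (C : numClosedFieldType) (N : nat).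
Local Notation n := (N + N)%N.

Definition Jmx : 'M[C]_n := block_mx 0 1%:M (- 1%:M) 0.

Lemma conj_Jmx : map_mx conjC Jmx = Jmx.
Proof. by rewrite map_block_mx map_mxN !map_mx0 map_mx1. Qed.

Lemma conj_trJmx : map_mx conjC Jmx^T = Jmx^T.
Proof. by rewrite -map_trmx conj_Jmx. Qed.

Lemma tr_Jmx : Jmx^T = - Jmx.
Proof. by rewrite tr_block_mx !trmx0 trmx1 linearN /= trmx1 opp_block_mx !oppr0 opprK. Qed.

Lemma mulJJ : Jmx *m Jmx = - 1%:M.
Proof.
rewrite mulmx_block !mulmx0 !mul0mx !add0r !addr0 mulmx1 mul1mx.
by rewrite (scalar_mx_block N N 1) opp_block_mx !oppr0.
Qed.

Lemma mulJtJ : Jmx^T *m Jmx = 1%:M.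
Proof. by rewrite tr_Jmx mulNmx mulJJ opprK. Qed.

Lemma mulJJt : Jmx *m Jmx^T = 1%:M.
Proof. by rewrite tr_Jmx mulmxN mulJJ opprK. Qed.

Lemma adj_Jmx : adj Jmx = Jmx^T.
Proof. by rewrite /adj conj_Jmx. Qed.

Lemma adj_trJmx : adj Jmx^T = Jmx.
Proof. by rewrite /adj conj_trJmx trmxK. Qed.

Lemma sharpE (Y : 'M[C]_n) : sharp Y = Jmx *m Y^T *m Jmx^T.
Proof.
rewrite /sharp -[Y in RHS]submxK tr_block_mx tr_Jmx /Jmx opp_block_mx !oppr0 opprK.
rewrite !mulmx_block !mulmx0 !mul0mx !addr0 !add0r !mulmx1 !mul1mx.
by rewrite !mulNmx !mulmxN !mulmx1 !mul1mx opprK.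
Qed.

Lemma Jform_alt (v : 'cV[C]_n) : v^T *m Jmx *m v = 0.
Proof.
set a := v^T *m Jmx *m v.
have a_sym : a^T = a by rewrite [a]mx11_scalar tr_scalar_mx.
have a_skew : a^T = - a by rewrite /a !trmx_mul trmxK tr_Jmx mulmxA mulmxN mulNmx.
apply/matrixP=> i j; rewrite !ord1 [RHS]mxE.
have /matrixP/(_ 0 0) := etrans (esym a_sym) a_skew.
rewrite [X in _ = X]mxE => /eqP; rewrite -addr_eq0 -mulr2n mulrn_eq0 /=.
by move/eqP.
Qed.

Definition jconj (M : 'M[C]_n) : 'M[C]_n := Jmx *m map_mx conjC M *m Jmx^T.

Lemma sharp_adjP (M : 'M[C]_n) : adj M = sharp M <-> jconj M = M.
Proof.
rewrite sharpE /adj; split => [adjM | fixM].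
  have : map_mx conjC M = Jmx *m M *m Jmx^T.
    by rewrite -[map_mx conjC M]trmxK adjM !trmx_mul !trmxK mulmxA.
  by move/(congr1 (map_mx conjC)); rewrite /jconj conj_mxK !map_mxM conj_Jmx conj_trJmx => <-.
by rewrite -{1}fixM /jconj !map_mxM conj_mxK conj_Jmx conj_trJmx !trmx_mul trmxK mulmxA.
Qed.

Lemma jconjM (A B : 'M[C]_n) : jconj (A *m B) = jconj A *m jconj B.
Proof.
rewrite /jconj map_mxM !mulmxA; congr (_ *m _).
by rewrite -!mulmxA (mulmxA Jmx^T) mulJtJ mul1mx.
Qed.

Lemma jconj_adj (A : 'M[C]_n) : jconj (adj A) = adj (jconj A).
Proof. by rewrite /jconj !adjM conj_adj adj_conj adj_trJmx adj_Jmx mulmxA. Qed.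

Lemma jconj_diag_dup (s : 'rV[C]_N) : (forall i, (s 0 i)^* = s 0 i) ->
  jconj (diag_mx (row_mx s s)) = diag_mx (row_mx s s).
Proof.
move=> s_real; rewrite /jconj conj_diag_mx; last first.
  by move=> i; rewrite mxE; case: splitP => j _; rewrite s_real.
rewrite diag_mx_row tr_Jmx /Jmx opp_block_mx !oppr0 opprK !mulmx_block.
rewrite !mulmx0 !mul0mx !addr0 !add0r !mulmx1 !mul1mx !mulNmx !mulmxN !mulmx1.
by rewrite mul1mx oppr0 opprK.
Qed.

Lemma Jform_jconj_fixed (X : 'M[C]_n) :
  jconj X = X -> X^T *m Jmx *m X = Jmx *m (adj X *m X).
Proof.
move=> fixX; have -> : X^T = Jmx *m adj X *m Jmx^T.
  by rewrite -{1}fixX /jconj !trmx_mul trmxK mulmxA.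
by rewrite -(mulmxA _ Jmx^T) mulJtJ mulmx1 mulmxA.
Qed.

Definition jdual k (M : 'M[C]_(n, k)) : 'M[C]_(n, k) := Jmx^T *m map_mx conjC M.

Lemma jdualM k l (M : 'M[C]_(n, k)) (D : 'M[C]_(k, l)) :
  jdual (M *m D) = jdual M *m map_mx conjC D.
Proof. by rewrite /jdual map_mxM mulmxA. Qed.

Lemma jconj_fixed_jdual k (A : 'M[C]_n) (M : 'M[C]_(n, k)) :
  jconj A = A -> A *m jdual M = jdual (A *m M).
Proof.
move=> fixA; have AJt : A *m Jmx^T = Jmx^T *m map_mx conjC A.
  have JtJt : Jmx^T *m Jmx^T = - 1%:M by rewrite tr_Jmx mulNmx mulmxN opprK mulJJ.
  by rewrite -{1}fixA /jconj -!mulmxA JtJt mulmxN mulmx1 mulmxN tr_Jmx mulNmx.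
by rewrite /jdual map_mxM !mulmxA AJt.
Qed.

Lemma adj_jdual k (M : 'M[C]_(n, k)) : adj (jdual M) = M^T *m Jmx.
Proof. by rewrite /jdual adjM adj_conj adj_trJmx. Qed.

Definition jframe (K : 'M[C]_(n, N)) : 'M[C]_n := row_mx K (jdual K).

Lemma adj_jframe (K : 'M[C]_(n, N)) : adj (jframe K) = col_mx (adj K) (K^T *m Jmx).
Proof. by rewrite adj_row_mx adj_jdual. Qed.

Lemma jconj_jframe (K : 'M[C]_(n, N)) : jconj (jframe K) = jframe K.
Proof.
have JK : Jmx *m map_mx conjC (jframe K) = jframe K *m Jmx.
  rewrite /jframe map_row_mx mul_mx_row /Jmx mul_row_block.
  rewrite !mulmx0 !add0r !addr0 mulmx1 mulmxN mulmx1 /jdual map_mxM conj_mxK conj_trJmx.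
  rewrite mulmxA -/Jmx mulJJt mul1mx; congr row_mx.
  by rewrite tr_Jmx mulNmx opprK.
by rewrite /jconj JK -mulmxA mulJJt mulmx1.
Qed.

End Symplectic.

Section IsotropicFrames.
Variables (C : numClosedFieldType) (N : nat).
Local Notation n := (N + N)%N.
Local Notation Jmx := (@Jmx C N).
Implicit Types (S : {set 'I_N}) (j : 'I_N).

Definition sdiag (S : {set 'I_N}) : 'M[C]_N := diag_mx (\row_i (i \in S)%:R).

Lemma sdiagT : sdiag setT = 1%:M.
Proof. by apply/matrixP=> i j; rewrite !mxE in_setT. Qed.

Lemma sdiag0 : sdiag set0 = 0.
Proof. by apply/matrixP=> i j; rewrite !mxE in_set0 mul0rn. Qed.

Lemma conj_sdiag S : map_mx conjC (sdiag S) = sdiag S.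
Proof. by apply: conj_diag_mx => i; rewrite mxE rmorph_nat. Qed.

Lemma sdiag_setU1 j S : j \notin S -> sdiag (j |: S) = sdiag S + delta_mx j j.
Proof.
move=> jNS; apply/matrixP=> a b; rewrite !mxE in_setU1.
have [<-|neq_ab] := eqVneq a b.
  rewrite !mulr1n andbb; have [->|] := eqVneq a j; first by rewrite (negPf jNS) add0r.
  by rewrite addr0.
rewrite !mulr0n add0r; have [eq_aj|] //= := eqVneq a j.
by rewrite -eq_aj eq_sym (negPf neq_ab).
Qed.

Lemma delta_sdiag j S : j \notin S -> delta_mx 0 j *m sdiag S = 0 :> 'M[C]_(1, N).
Proof.
move=> jNS; apply/matrixP=> a b; rewrite mul_mx_diag !mxE.
by have [->|] := eqVneq b j; rewrite ?(negPf jNS) ?mulr0 // andbF mul0r.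
Qed.

Lemma sdiag_subset S S' : S \subset S' -> sdiag S' *m sdiag S = sdiag S.
Proof.
move=> sSS'; apply/matrixP=> a b; rewrite mul_mx_diag !mxE.
have [->|] := eqVneq a b; last by rewrite !mulr0n mul0r.
by case: (boolP (b \in S)) => bS; rewrite ?mulr0 // (subsetP sSS' _ bS) !mulr1.
Qed.

Lemma col_sdiag_notin S (G : 'M[C]_(n, N)) j :
  G *m sdiag S = G -> j \notin S -> col j G = 0.
Proof.
by move=> GS jNS; apply/matrixP=> a b; rewrite -GS mul_mx_diag !mxE (negPf jNS) mulr0.
Qed.

Definition isoframe S (G : 'M[C]_(n, N)) :=
  [/\ G *m sdiag S = G, adj G *m G = sdiag S & G^T *m Jmx *m G = 0].

Lemma isoframe_add S (G : 'M[C]_(n, N)) j (v : 'cV[C]_n) :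
  isoframe S G -> j \notin S ->
  adj v *m v = 1%:M -> adj G *m v = 0 -> G^T *m Jmx *m v = 0 ->
  let G' := G + v *m delta_mx 0 j in
  [/\ isoframe (j |: S) G', G' *m sdiag S = G, col j G' = v &
      forall i, i != j -> col i G' = col i G].
Proof.
move=> [GS GG GJG] jNS vv Gv GJv; rewrite /=.
have Gj : G *m delta_mx j j = 0.
  rewrite -GS -mulmxA (_ : sdiag S *m _ = 0) ?mulmx0 //.
  apply/matrixP=> a b; rewrite mul_diag_mx !mxE.
  by have [->|] := eqVneq a j; rewrite ?(negPf jNS) ?mul0r //= mulr0.
have vG : adj v *m G = 0 by rewrite -[LHS]adjK adjM adjK Gv adj0.
have vJG : v^T *m Jmx *m G = 0.
  have := congr1 trmx GJv; rewrite !trmx_mul trmxK tr_Jmx mulmxA mulmxN mulNmx trmx0.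
  by move/eqP; rewrite oppr_eq0 => /eqP.
split.
- split.
  + rewrite sdiag_setU1 // mulmxDl !mulmxDr GS Gj addr0 -!mulmxA delta_sdiag //.
    by rewrite mulmx0 add0r mul_delta_mx.
  + rewrite adjD adjM adj_delta sdiag_setU1 // mulmxDl !mulmxDr GG mulmxA Gv.
    rewrite -mulmxA vG mul0mx mulmx0 !addr0 add0r -mulmxA (mulmxA (adj v)) vv.
    by rewrite mul1mx mul_delta_mx.
  + rewrite [(_ + _)^T]linearD /= trmx_mul trmx_delta !mulmxDl !mulmxDr GJG mulmxA GJv.
    rewrite mul0mx add0r -!mulmxA (mulmxA v^T) vJG mulmx0 add0r !mulmxA.
    by rewrite -(mulmxA _ v^T) -(mulmxA _ (v^T *m Jmx)) Jform_alt mulmx0 mul0mx addr0.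
- by rewrite mulmxDl -mulmxA delta_sdiag // mulmx0 addr0.
- rewrite !colE mulmxDl -colE (col_sdiag_notin GS jNS) add0r -mulmxA mul_delta_mx.
  by rewrite (_ : delta_mx 0 0 = 1%:M) ?mulmx1 //; apply/matrixP=> a b; rewrite !ord1 !mxE.
- move=> i ij; rewrite !colE mulmxDl -mulmxA mul_delta_mx_0 ?mulmx0 ?addr0 //.
  by rewrite eq_sym.
Qed.

Lemma isoframe_complete_with (good : 'cV[C]_n -> Prop) :
  (forall S (G : 'M[C]_(n, N)), S != setT -> isoframe S G ->
     (forall i, i \in S -> good (col i G)) ->
     exists v : 'cV[C]_n,
       [/\ adj v *m v = 1%:M, adj G *m v = 0, G^T *m Jmx *m v = 0 & good v]) ->
  forall S (G : 'M[C]_(n, N)), isoframe S G -> (forall i, i \in S -> good (col i G)) ->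
  exists H : 'M[C]_(n, N),
    [/\ H *m sdiag S = G, isoframe setT H & forall i, good (col i H)].
Proof.
move=> extend S G; have [k] := ubnP #|~: S|.
elim: k S G => // k IHk S G ltSk isoG goodG.
have [eqST | neqST] := eqVneq S setT.
  exists G; rewrite -eqST; have [GS _ _] := isoG.
  by split => // i; apply: goodG; rewrite eqST in_setT.
have /properP[_ [j _ jNS]] : S \proper setT by rewrite properT.
have [v [vv Gv GJv goodv]] := extend S G neqST isoG goodG.
have [isoG' G'S G'j G'i] := isoframe_add isoG jNS vv Gv GJv.
have ltS'k : (#|~: (j |: S)| < k)%N.
  rewrite -ltnS (leq_trans _ ltSk) // ltnS proper_card // setCU.
  by apply/properP; split; [exact: subsetIr | exists j; rewrite ?inE ?eqxx].
have [|H [HS isoH goodH]] := IHk _ _ ltS'k isoG'.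
  by move=> i; rewrite in_setU1; have [->|/G'i ->] := eqVneq i j => /=; [rewrite G'j | exact: goodG].
exists H; split => //.
by rewrite -(sdiag_subset (subsetUr [set j] S)) mulmxA HS G'S.
Qed.

Lemma adj_jframe_mul S (G : 'M[C]_(n, N)) : isoframe S G ->
  adj (jframe G) *m jframe G = block_mx (sdiag S) 0 0 (sdiag S).
Proof.
move=> [_ GG GJG]; rewrite adj_jframe /jframe mul_col_row GG GJG.
have -> : adj G *m jdual G = 0.
  rewrite /jdual /adj mulmxA tr_Jmx mulmxN mulNmx map_trmx -conj_Jmx -!map_mxM GJG.
  by rewrite map_mx0 oppr0.
have -> : G^T *m Jmx *m jdual G = sdiag S.
  rewrite /jdual mulmxA -(mulmxA G^T) mulJJt mulmx1.
  have -> : map_mx conjC G = (adj G)^T by rewrite trmxK.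
  by rewrite -trmx_mul GG tr_diag_mx.
by [].
Qed.

Lemma jframe_sdiag S (G : 'M[C]_(n, N)) : isoframe S G ->
  jframe G *m block_mx (sdiag S) 0 0 (sdiag S) = jframe G.
Proof.
move=> [GS _ _]; rewrite /jframe mul_row_block !mulmx0 addr0 add0r GS.
by rewrite -[sdiag S]conj_sdiag -jdualM GS.
Qed.

Lemma unitary_jframe (G : 'M[C]_(n, N)) : isoframe setT G -> unitary_mx (jframe G).
Proof.
move=> isoG; have VV : adj (jframe G) *m jframe G = 1%:M.
  by rewrite (adj_jframe_mul isoG) sdiagT -scalar_mx_block.
by split; last exact: mulmx1C.
Qed.

Lemma adj_jframe_eq0 (G : 'M[C]_(n, N)) (v : 'cV[C]_n) :
  adj (jframe G) *m v = 0 -> adj G *m v = 0 /\ G^T *m Jmx *m v = 0.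
Proof. by rewrite adj_jframe mul_col_mx -col_mx0 => /eq_col_mx. Qed.

Lemma jframe_kernel S (G : 'M[C]_(n, N)) : S != setT -> isoframe S G ->
  exists2 u : 'cV[C]_n, u != 0 & adj (jframe G) *m u = 0.
Proof.
move=> neqST [GS _ _]; have /properP[_ [j _ jNS]] : S \proper setT by rewrite properT.
apply: (@kernel_of_zero_row _ _ _ (lshift N j)); rewrite adj_jframe rowKu.
apply/matrixP=> a b; rewrite !mxE.
by have /matrixP/(_ b 0) := col_sdiag_notin GS jNS; rewrite !mxE => ->; rewrite rmorph0.
Qed.

Lemma isoframe_completion S (G : 'M[C]_(n, N)) : isoframe S G ->
  exists H : 'M[C]_(n, N), H *m sdiag S = G /\ isoframe setT H.
Proof.
have extend S' (G' : 'M[C]_(n, N)) : S' != setT -> isoframe S' G' ->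
    (forall i, i \in S' -> xpredT (col i G')) ->
    exists v : 'cV[C]_n,
      [/\ adj v *m v = 1%:M, adj G' *m v = 0, G'^T *m Jmx *m v = 0 & xpredT v].
  move=> neqS'T isoG' _; have [u u0 Wu] := jframe_kernel neqS'T isoG'.
  have [c cu] := normalize_cV u0; exists (c *: u).
  have [] // := @adj_jframe_eq0 G' (c *: u).
  by rewrite -scalemxAr Wu scaler0.
move=> isoG; have [H [HS isoH _]] := isoframe_complete_with extend isoG (fun _ _ => isT).
by exists H.
Qed.

End IsotropicFrames.

Arguments sdiag {C N} S.

Section HermitianEigen.
Variable C : numClosedFieldType.

Lemma rayleigh_conj m (A : 'M[C]_m) (v : 'cV[C]_m) : adj A = A ->
  ((adj v *m A *m v) 0 0)^* = (adj v *m A *m v) 0 0.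
Proof.
move=> hermA; have adj11 (M : 'M[C]_1) : adj M 0 0 = (M 0 0)^* by rewrite !mxE.
by rewrite -adj11 !adjM adjK hermA mulmxA.
Qed.

Lemma exists_eigenvector_range m (A Q : 'M[C]_m) :
  adj A = A -> A *m Q = Q *m A -> Q != 0 ->
  exists (d : C) (w : 'cV[C]_m), Q *m w != 0 /\ A *m (Q *m w) = d *: (Q *m w).
Proof.
move=> hermA AQ Q0; set M := spectralmx A.
have MM : M *m adj M = 1%:M by rewrite -tstar_adj; apply/unitarymxP/spectral_unitarymx.
have normA : A \is normalmx by apply/normalmxP; rewrite tstar_adj hermA.
have AM : A *m adj M = adj M *m diag_mx (spectral_diag A).
  have E := orthomx_spectralP normA.
  rewrite invmx_unitary ?spectral_unitarymx // tstar_adj -/M in E.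
  by rewrite {1}E -!mulmxA MM mulmx1.
have [k Qk] : exists k, col k (Q *m adj M) != 0.
  apply/existsP; apply: contraNT Q0 => /existsPn Qcols; apply/eqP.
  have QM0 : Q *m adj M = 0.
    by apply: col_matrixP => k; have /negbNE/eqP -> := Qcols k; rewrite colE mul0mx.
  by rewrite -[Q]mulmx1 -(mulmx1C MM) mulmxA QM0 mul0mx.
exists (spectral_diag A 0 k), (col k (adj M)); split; first by rewrite -col_mulmx.
by rewrite mulmxA AQ -mulmxA -col_mulmx AM col_mul_diag scalemxAr.
Qed.

(* The eigenvalue is taken to be the Rayleigh quotient, so that the predicate
   depends on the (unit) vector [v] only. *)
Definition eigen_rayleigh m (A : 'M[C]_m) (v : 'cV[C]_m) :=
  A *m v = (adj v *m A *m v) 0 0 *: v.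

Lemma eigen_rayleigh_unit m (A : 'M[C]_m) (v : 'cV[C]_m) (d : C) :
  adj v *m v = 1%:M -> A *m v = d *: v -> eigen_rayleigh A v.
Proof.
move=> vv Av; rewrite /eigen_rayleigh Av -mulmxA Av -scalemxAr vv.
by rewrite mxE mxE eqxx mulr1n mulr1.
Qed.

End HermitianEigen.

Section SymplecticEigen.
Variables (C : numClosedFieldType) (N : nat).
Local Notation n := (N + N)%N.
Local Notation Jmx := (@Jmx C N).

Lemma isoframe_eigen_diag (S : {set 'I_N}) (A : 'M[C]_n) (G : 'M[C]_(n, N)) :
  G *m sdiag S = G -> (forall i, i \in S -> eigen_rayleigh A (col i G)) ->
  A *m G = G *m diag_mx (\row_i (adj (col i G) *m A *m col i G) 0 0).
Proof.
move=> GS eigG; apply: col_matrixP => i; rewrite col_mulmx col_mul_diag mxE.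
have [/eigG //|iNS] := boolP (i \in S).
by rewrite (col_sdiag_notin GS iNS) mulmx0 scaler0.
Qed.

Lemma isoframe_eigen_extend (A : 'M[C]_n) : adj A = A -> jconj A = A ->
  forall (S : {set 'I_N}) (G : 'M[C]_(n, N)), S != setT -> isoframe S G ->
  (forall i, i \in S -> eigen_rayleigh A (col i G)) ->
  exists v : 'cV[C]_n,
    [/\ adj v *m v = 1%:M, adj G *m v = 0, G^T *m Jmx *m v = 0 & eigen_rayleigh A v].
Proof.
move=> hermA fixA S G neqST isoG eigG; set W := jframe G.
have [GS _ _] := isoG.
set mu := \row_i (adj (col i G) *m A *m col i G) 0 0.
have mu2_real k : ((row_mx mu mu) 0 k)^* = (row_mx mu mu) 0 k.
  by rewrite mxE; case: splitP => i _; rewrite mxE rayleigh_conj.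
set D := diag_mx (row_mx mu mu).
have AW : A *m W = W *m D.
  rewrite /W /D /jframe diag_mx_row mul_mx_row mul_row_block !mulmx0 addr0 add0r.
  rewrite jconj_fixed_jdual // (isoframe_eigen_diag GS eigG) jdualM conj_diag_mx //.
  by move=> i; rewrite mxE rayleigh_conj.
have WA : adj W *m A = D *m adj W.
  by rewrite -[LHS]adjK adjM adjK hermA AW adjM adj_diag_mx.
(* [Q] projects onto the orthogonal complement of the columns of [W], an
   [A]-invariant subspace in which the new eigenvector is found. *)
set Q := 1%:M - W *m adj W.
have AQ : A *m Q = Q *m A.
  by rewrite /Q mulmxBr mulmxBl mulmx1 mul1mx mulmxA AW -!mulmxA WA.
have WQ : adj W *m Q = 0.
  have WWW : W *m adj W *m W = W.
    by rewrite -mulmxA (adj_jframe_mul isoG) (jframe_sdiag isoG).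
  have := congr1 adj WWW; rewrite !adjM adjK mulmxA => WWW'.
  by rewrite /Q mulmxBr mulmx1 mulmxA WWW' subrr.
have Q0 : Q != 0.
  have [u u0 Wu] := jframe_kernel neqST isoG.
  apply/negP => /eqP Q0; case/eqP: u0.
  by rewrite -[u]mul1mx -(subrK (W *m adj W) 1%:M) -/Q Q0 add0r -mulmxA Wu mulmx0.
have [d [c [Qc0 AQc]]] := exists_eigenvector_range hermA AQ Q0.
have [a av] := normalize_cV Qc0.
have Wv : adj W *m (a *: (Q *m c)) = 0 by rewrite -scalemxAr mulmxA WQ mul0mx scaler0.
have [Gv GJv] := adj_jframe_eq0 Wv.
exists (a *: (Q *m c)); split => //; apply: (eigen_rayleigh_unit (d := d) av).
by rewrite -scalemxAr AQc !scalerA mulrC.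
Qed.

Lemma symplectic_eigenframe (A : 'M[C]_n) : adj A = A -> jconj A = A ->
  exists (F : 'M[C]_(n, N)) (d : 'rV[C]_N), isoframe setT F /\ A *m F = F *m diag_mx d.
Proof.
move=> hermA fixA.
have iso0 : isoframe set0 (0 : 'M[C]_(n, N)).
  by split; rewrite ?mul0mx ?mulmx0 ?sdiag0 // trmx0 !mul0mx.
have eig0 i : i \in set0 -> eigen_rayleigh A (col i (0 : 'M[C]_(n, N))) by rewrite in_set0.
have [F [_ isoF eigF]] := isoframe_complete_with (isoframe_eigen_extend hermA fixA) iso0 eig0.
have [FT _ _] := isoF; exists F, (\row_i (adj (col i F) *m A *m col i F) 0 0).
by split => //; apply: isoframe_eigen_diag FT (fun i _ => eigF i).
Qed.

End SymplecticEigen.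

Section Polar.
Variables (C : numClosedFieldType) (N : nat).
Local Notation n := (N + N)%N.
Local Notation Jmx := (@Jmx C N).
Implicit Types s : 'rV[C]_N.

Definition supp s := [set j | s 0 j != 0].

(* Thanks to [0^-1 = 0], this is the pseudo-inverse of [diag_mx s]. *)
Definition diag_pinv s : 'M[C]_N := diag_mx (\row_j (s 0 j)^-1).

Lemma diag_pinvK s : diag_pinv s *m diag_mx s = sdiag (supp s).
Proof.
rewrite mulmx_diag; congr diag_mx; apply/rowP=> j; rewrite !mxE inE.
by have [->|sj0] := eqVneq (s 0 j) 0; rewrite ?mulr0 ?mulVf.
Qed.

Lemma sdiag_supp s : sdiag (supp s) *m diag_mx s = diag_mx s.
Proof.
rewrite mulmx_diag; congr diag_mx; apply/rowP=> j; rewrite !mxE inE.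
by have [->|_] := eqVneq (s 0 j) 0; rewrite ?mulr0 ?mul1r.
Qed.

Lemma diag_pinv_supp s : diag_pinv s *m sdiag (supp s) = diag_pinv s.
Proof.
rewrite mulmx_diag; congr diag_mx; apply/rowP=> j; rewrite !mxE inE.
by have [->|_] := eqVneq (s 0 j) 0; rewrite ?invr0 ?mul0r ?mulr1.
Qed.

Lemma gram_supp m (Y : 'M[C]_(m, N)) s :
  adj Y *m Y = diag_mx s *m diag_mx s -> Y *m sdiag (supp s) = Y.
Proof.
move=> YY; apply: col_matrixP => j; rewrite col_mul_diag mxE inE.
have [sj0|] := eqVneq (s 0 j) 0; last by rewrite scale1r.
rewrite scale0r; apply/esym/norm2_eq0.
by rewrite norm2_col YY mulmx_diag !mxE eqxx mulr1n sj0 mulr0.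
Qed.

Lemma isoframe_pinv (Y : 'M[C]_(n, N)) s : (forall j, (s 0 j)^* = s 0 j) ->
  adj Y *m Y = diag_mx s *m diag_mx s -> Y^T *m Jmx *m Y = 0 ->
  isoframe (supp s) (Y *m diag_pinv s).
Proof.
move=> s_real YY YJY; split; first by rewrite -mulmxA diag_pinv_supp.
- have adj_pinv : adj (diag_pinv s) = diag_pinv s.
    by apply: adj_diag_mx => j; rewrite mxE fmorphV; congr (_^-1); exact: s_real.
  rewrite adjM adj_pinv -mulmxA (mulmxA (adj Y)) YY !mulmx_diag.
  congr diag_mx; apply/rowP=> j; rewrite !mxE inE.
  have [->|sj0] := eqVneq (s 0 j) 0; first by rewrite /= !(mulr0, mul0r).
  by rewrite mulfK // mulVf.
- have -> : (Y *m diag_pinv s)^T *m Jmx *m (Y *m diag_pinv s) =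
            (diag_pinv s)^T *m (Y^T *m Jmx *m Y) *m diag_pinv s.
    by rewrite trmx_mul !mulmxA.
  by rewrite YJY mulmx0 mul0mx.
Qed.

Lemma isoframe_scaled_image (X : 'M[C]_n) (F : 'M[C]_(n, N)) s :
  jconj X = X -> isoframe setT F -> (forall j, 0 <= s 0 j) ->
  adj X *m X *m F = F *m (diag_mx s *m diag_mx s) ->
  exists H : 'M[C]_(n, N), isoframe setT H /\ X *m F = H *m diag_mx s.
Proof.
move=> fixX [_ FF FJF] s_ge0 AF; rewrite sdiagT in FF.
have XFXF : adj (X *m F) *m (X *m F) = diag_mx s *m diag_mx s.
  by rewrite adjM -mulmxA (mulmxA (adj X)) AF mulmxA FF mul1mx.
have XFJ : (X *m F)^T *m Jmx *m (X *m F) = 0.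
  have -> : (X *m F)^T *m Jmx *m (X *m F) = F^T *m (X^T *m Jmx *m X) *m F.
    by rewrite trmx_mul !mulmxA.
  by rewrite Jform_jconj_fixed // -mulmxA -mulmxA AF !mulmxA FJF !mul0mx.
have s_real j : (s 0 j)^* = s 0 j by exact: geC0_conj.
have [H [HS isoH]] := isoframe_completion (isoframe_pinv s_real XFXF XFJ).
exists H; split => //.
by rewrite -sdiag_supp mulmxA HS -mulmxA diag_pinvK gram_supp.
Qed.

Lemma polar_of_frames (X : 'M[C]_n) (F H : 'M[C]_(n, N)) s :
  jconj X = X -> isoframe setT F -> isoframe setT H -> (forall j, 0 <= s 0 j) ->
  X *m F = H *m diag_mx s ->
  exists U P : 'M[C]_n,
    [/\ unitary_mx U, psd_mx P, jconj U = U, jconj P = P & X = U *m P].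
Proof.
move=> fixX isoF isoH s_ge0 XF.
set V := jframe F; set W := jframe H; set Ds := diag_mx (row_mx s s).
have [VV VV'] := unitary_jframe isoF.
have s_real j : (s 0 j)^* = s 0 j by exact: geC0_conj.
have XV : X *m V = W *m Ds.
  rewrite /V /W /Ds /jframe diag_mx_row mul_mx_row mul_row_block !mulmx0 addr0 add0r.
  by rewrite jconj_fixed_jdual // XF jdualM conj_diag_mx.
exists (W *m adj V), (V *m Ds *m adj V); split.
- exact: unitary_mxM (unitary_jframe isoH) (unitary_mx_adj (unitary_jframe isoF)).
- by apply: psd_mx_conj_diag => k; rewrite mxE; case: splitP.
- by rewrite jconjM jconj_adj !jconj_jframe.
- by rewrite !jconjM jconj_adj jconj_diag_dup // !jconj_jframe.
- by rewrite !mulmxA -(mulmxA W) VV mulmx1 -XV -mulmxA VV' mulmx1.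
Qed.

End Polar.

Theorem mainTheorem4 (R : realType) (N : nat) (X : 'M[R[i]]_(N + N)) :
  adj X = sharp X ->
  exists U P : 'M[R[i]]_(N + N),
    [/\ unitary_mx U, psd_mx P, adj U = sharp U, adj P = sharp P & X = U *m P].
Proof.
move=> /sharp_adjP fixX; set A := adj X *m X.
have hermA : adj A = A by rewrite adjM adjK.
have fixA : jconj A = A by rewrite jconjM jconj_adj fixX.
have [F [d [isoF AF]]] := symplectic_eigenframe hermA fixA.
have d_ge0 : forall j, 0 <= d 0 j.
  apply: (@gram_diag_ge0 _ _ _ (X *m F)); have [_ FF _] := isoF.
  by rewrite adjM -mulmxA (mulmxA (adj X)) AF mulmxA FF sdiagT mul1mx.
set s := \row_j sqrtC (d 0 j).
have s_ge0 j : 0 <= s 0 j by rewrite mxE sqrtC_ge0 d_ge0.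
have [|H [isoH XF]] := isoframe_scaled_image fixX isoF s_ge0.
  rewrite -/A AF mulmx_diag; congr (_ *m diag_mx _).
  by apply/rowP=> j; rewrite !mxE -expr2 sqrtCK.
have [U [P [uU pP fixU fixP XUP]]] := polar_of_frames fixX isoF isoH s_ge0 XF.
by exists U, P; split => //; apply/sharp_adjP.
Qed.
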